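(* For every $q\in X^*\setminus\{e\}$: $Q_q=P_q^*\cdot q\cup\{e\}\subseteq P_q^*$, and $\mathrm{pref}(P_q^* )=\mathrm{pref}(Q_q)=P_q^*\cdot\mathrm{pref}(q)$.
   Context: $X$ is a finite alphabet with $|X|\ge 2$; $X^*$ the finite words (empty word $e$). $w\sqsubseteq\eta$ means $w$ is a prefix of $\eta$, $w\sqsubset\eta$ a proper prefix. For languages $L$, $L^*=\bigcup_{i\in\mathbb{N}}L^i$; concatenation extends to sets. $\mathrm{pref}(B)$ is the set of finite prefixes of elements of $B$. A word $\eta$ is quasiperiodic with quasiperiod $q\in X^*\setminus\{e\}$ if for every natural number $j<|\eta|$ there is a prefix $u_j\sqsubseteq\eta$ with $j-|q|<|u_j|\le j$ and $u_j\cdot q\sqsubseteq\eta$. $Q_q$ is the set of finite words quasiperiodic with quasiperiod $q$ (including $e$). $P_q:=\{v: e\sqsubset v\sqsubseteq q\sqsubset v\cdot q\}$. *)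

From mathcomp Require Import all_boot.
Set Implicit Arguments. Unset Strict Implicit. Unset Printing Implicit Defensive.

Section Words.
Variable X : finType.
Definition lang := seq X -> Prop.

Definition lcat (L M : lang) : lang :=
  fun w => exists u v, L u /\ M v /\ w = u ++ v.

Fixpoint lpow (L : lang) (i : nat) : lang :=
  match i with
  | 0 => fun w => w = [::]
  | i.+1 => lcat (lpow L i) L
  end.

Definition lstar (L : lang) : lang := fun w => exists i, lpow L i w.

Definition lsing (q : seq X) : lang := fun w => w = q.

Definition lpref (B : lang) : lang := fun w => exists eta, B eta /\ prefix w eta.

Definition leq_lang (L M : lang) : Prop := forall w, L w <-> M w.
Definition lsub (L M : lang) : Prop := forall w, L w -> M w.

(* eta is quasiperiodic with quasiperiod q: for every j < |eta| there is a
   prefix u_j of eta with j - |q| < |u_j| <= j and u_j q prefix of eta.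
   (j - |q| < |u_j| is written j < |u_j| + |q| to avoid truncated subtraction.) *)
Definition quasiperiodic (q eta : seq X) : Prop :=
  forall j, j < size eta ->
    exists u, [/\ prefix u eta, j < size u + size q, size u <= j
                & prefix (u ++ q) eta].

Definition Qq (q : seq X) : lang := fun w => quasiperiodic q w.

Definition Pq (q : seq X) : lang :=
  fun v => [/\ v != [::], prefix v q & (prefix q (v ++ q) /\ q != v ++ q)].
End Words.

(* Reading a quasiperiodic word w = u q from the right, the occurrence of q
   covering position |u| - 1 starts at some |u1| < |u|, and u = u1 d with
   d ∈ P_q: d is nonempty, no longer than q, and q ⊑ d q because both
   u1 q and u1 d q are prefixes of w.  Since u1 q is again quasiperiodic,
   induction gives Q_q \ {e} ⊆ P_q^* q.  Conversely a factor v ∈ P_q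
   prepended to q only shifts q by at most |q|, so appending factors of P_q
   before the final q keeps the occurrences of q overlapping.  The prefix
   statements follow because every prefix of u q with u ∈ P_q^* either ends
   inside the final q or is a prefix of u' q for a shorter product u'. *)
From mathcomp Require Import all_boot zify.
Set Implicit Arguments. Unset Strict Implicit. Unset Printing Implicit Defensive.

Section Prefixes.
Variable T : eqType.
Implicit Types (a b c w : seq T).

Lemma prefix_common a b w :
  prefix a w -> prefix b w -> size a <= size b -> prefix a b.
Proof. by rewrite !prefixE => /eqP Ha /eqP Hb Hab; rewrite -Hb take_takel // Ha. Qed.

Lemma prefix_cat_cases w a b :
  prefix w (a ++ b) -> prefix w a \/ exists2 p, prefix p b & w = a ++ p.
Proof.
rewrite prefixE => /eqP <-; rewrite take_cat; case: ltnP => _.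
  by left; apply: prefix_take.
by right; exists (take (size w - size a) b); first exact: prefix_take.
Qed.

End Prefixes.

Lemma lstar_catr (X : finType) (L : lang X) u v :
  lstar L u -> L v -> lstar L (u ++ v).
Proof. by move=> [i Hu] Lv; exists i.+1, u, v. Qed.

Section Quasiperiod.
Variables (X : finType) (q : seq X).
Hypothesis q_neq0 : q != [::].
Implicit Types (u v w d : seq X).

Lemma Pq_self : Pq q q.
Proof.
split=> //; first exact: prefix_refl.
split; first exact: prefix_prefix.
apply/eqP => /(congr1 size).
by move: q_neq0; rewrite -size_eq0 size_cat; lia.
Qed.

Lemma Pq_intro d :
  d != [::] -> size d <= size q -> prefix q (d ++ q) -> Pq q d.
Proof.
move=> d_neq0 le_dq qdq; split=> //.
  exact: prefix_common (prefix_prefix d q) qdq le_dq.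
split=> //; apply/eqP => /(congr1 size).
by move: d_neq0; rewrite -size_eq0 size_cat; lia.
Qed.

(* [quasiperiodic] with its sizes elaborated at [seq X], so that [lia] sees the
   same atoms as in the statements below. *)
Lemma quasiperiodicP w : quasiperiodic q w <->
  forall j, j < size w -> exists u : seq X,
    [/\ prefix u w, j < size u + size q, size u <= j & prefix (u ++ q) w].
Proof. by []. Qed.

Lemma quasiperiodic_self : quasiperiodic q q.
Proof. by move=> j lt_jq; exists [::]; split; rewrite ?prefix0s ?prefix_refl. Qed.

(* A factor [v ∈ P_q] moves the last occurrence of [q] by [|v| <= |q|]. *)
Lemma quasiperiodic_cat u v :
  Pq q v -> quasiperiodic q (u ++ q) -> quasiperiodic q (u ++ v ++ q).
Proof.
case=> _ vq [qvq _] /quasiperiodicP Huq; apply/quasiperiodicP.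
have le_vq : size v <= size q := size_prefix vq.
have uq_pre : prefix (u ++ q) (u ++ v ++ q) by rewrite prefix_catr ?eqxx.
move=> j; rewrite !size_cat => lt_j.
case: (ltnP j (size u + size v)) => le_j.
  have [|w [w1 w2 w3 w4]] := Huq j; first by rewrite size_cat; lia.
  by exists w; split=> //; apply: prefix_trans uq_pre.
exists (u ++ v); rewrite size_cat catA.
by split; rewrite ?prefix_refl ?prefix_prefix //; lia.
Qed.

Lemma quasiperiodic_lstar u : lstar (Pq q) u -> quasiperiodic q (u ++ q).
Proof.
case=> i; elim: i u => [|i IHi] u /=; first by move->; apply: quasiperiodic_self.
by case=> [u' [v [Hu' [Pv ->]]]]; rewrite -catA; apply/quasiperiodic_cat/IHi.
Qed.

Lemma quasiperiodic_suffix w :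
  quasiperiodic q w -> w != [::] -> exists u, w = u ++ q.
Proof.
move=> /quasiperiodicP qw w_neq0.
have w_gt0 : 0 < size w by rewrite lt0n size_eq0.
have [|u [_ lt_j _ uqw]] := qw (size w).-1; first by rewrite ltn_predL.
have le_w : size w <= size (u ++ q) by rewrite size_cat; lia.
by exists u; move: uqw; rewrite prefixE take_oversize // => /eqP.
Qed.

Lemma quasiperiodic_prefix u w :
  quasiperiodic q w -> prefix (u ++ q) w -> quasiperiodic q (u ++ q).
Proof.
move=> /quasiperiodicP qw uqw; apply/quasiperiodicP => j; rewrite size_cat => lt_j.
case: (ltnP j (size u)) => lt_ju.
  have le_uqw : size (u ++ q) <= size w := size_prefix uqw.
  have [|v [vw lt_jv le_vj vqw]] := qw j; first by move: le_uqw; rewrite size_cat; lia.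
  have le_v : size v <= size (u ++ q) by rewrite size_cat; lia.
  have le_vq : size (v ++ q) <= size (u ++ q) by rewrite !size_cat; lia.
  exists v; split=> //; first exact: prefix_common vw uqw le_v.
  exact: prefix_common vqw uqw le_vq.
by exists u; split; rewrite ?prefix_refl ?prefix_prefix //; lia.
Qed.

Lemma lstar_quasiperiodic u : quasiperiodic q (u ++ q) -> lstar (Pq q) u.
Proof.
have [n] := ubnP (size u); elim: n u => // n IHn u /ltnSE le_un quq.
have /quasiperiodicP qw := quq.
have [->|u_neq0] := eqVneq u [::]; first by exists 0.
have lt0u : 0 < size u by rewrite lt0n size_eq0.
have [|u1 [u1uq lt_u1 le_u1 u1q_pre]] := qw (size u).-1; first by rewrite size_cat; lia.
have Pu1 : lstar (Pq q) u1.
  by apply: IHn; [lia | apply: quasiperiodic_prefix quq u1q_pre].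
have le_u1u : size u1 <= size u by lia.
have [d Eu] : exists d : seq X, u = u1 ++ d.
  by apply/prefixP; apply: prefix_common u1uq (prefix_prefix u q) le_u1u.
have size_u : size u = size u1 + size d by rewrite Eu size_cat.
rewrite Eu; apply: lstar_catr Pu1 _; apply: Pq_intro; last 2 first.
- by lia.
- by move: u1q_pre; rewrite Eu -catA prefix_catr ?eqxx.
by apply/eqP=> d0; move: size_u; rewrite d0 /=; lia.
Qed.

Lemma prefix_lstar_cat u w :
  lstar (Pq q) u -> prefix w (u ++ q) -> lcat (lstar (Pq q)) (lpref (lsing q)) w.
Proof.
case=> i; elim: i u w => [|i IHi] u w /=.
  by move-> => wq; exists [::], w; split; [exists 0 | split=> //; exists q].
case=> [u' [v [Hu' [Pv ->]]]] /prefix_cat_cases [wu|[p pq ->]].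
  have [_ vq _] := Pv; apply: (IHi u') => //.
  by apply: prefix_trans wu _; rewrite prefix_catr ?eqxx.
exists (u' ++ v), p; split; last by split=> //; exists q.
by apply: lstar_catr Pv; exists i.
Qed.

Lemma Qq_eq_lstar_cat_q :
  leq_lang (Qq q) (fun w => lcat (lstar (Pq q)) (lsing q) w \/ w = [::]).
Proof.
move=> w; split=> [qw|[[u [_ [Pu [-> ->]]]] | ->]]; last by [].
  have [->|w_neq0] := eqVneq w [::]; [by right | left].
  have [u Ew] := quasiperiodic_suffix qw w_neq0.
  by exists u, q; split=> //; apply: lstar_quasiperiodic; rewrite -Ew.
exact: quasiperiodic_lstar.
Qed.

Lemma lstar_cat_q_sub :
  lsub (fun w => lcat (lstar (Pq q)) (lsing q) w \/ w = [::]) (lstar (Pq q)).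
Proof.
by move=> w [[u [_ [Pu [-> ->]]]] | ->]; [apply: lstar_catr Pu Pq_self | exists 0].
Qed.

Lemma lpref_lstar_eq : leq_lang (lpref (lstar (Pq q))) (lpref (Qq q)).
Proof.
move=> w; split=> [[u [Pu wu]]|[u [qu wu]]].
  by exists (u ++ q); split; [apply: quasiperiodic_lstar | apply: prefix_catl].
by exists u; split=> //; apply/lstar_cat_q_sub/Qq_eq_lstar_cat_q.
Qed.

Lemma lpref_Qq_eq : leq_lang (lpref (Qq q)) (lcat (lstar (Pq q)) (lpref (lsing q))).
Proof.
move=> w; split=> [[u [/Qq_eq_lstar_cat_q qu wu]]|[u [p [Pu [[_ [-> pq]] ->]]]]].
  case: qu => [[u' [_ [Pu' [-> Eu]]]] | Eu]; rewrite Eu in wu.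
    exact: prefix_lstar_cat Pu' wu.
  move: wu; rewrite prefixs0 => /eqP ->.
  by exists [::], [::]; split; [exists 0 | split=> //; exists q; rewrite prefix0s].
exists (u ++ q); split; first exact: quasiperiodic_lstar.
by rewrite prefix_catr ?eqxx.
Qed.

End Quasiperiod.

Theorem proposition1 (X : finType) (hX : 1 < #|X|) (q : seq X) (hq : q != [::]) :
  [/\ leq_lang (Qq q) (fun w => lcat (lstar (Pq q)) (lsing q) w \/ w = [::]),
      lsub (fun w => lcat (lstar (Pq q)) (lsing q) w \/ w = [::]) (lstar (Pq q)),
      leq_lang (lpref (lstar (Pq q))) (lpref (Qq q))
    & leq_lang (lpref (Qq q)) (lcat (lstar (Pq q)) (lpref (lsing q)))].
Proof.
split; first exact: Qq_eq_lstar_cat_q.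
- exact: lstar_cat_q_sub hq.
- exact: lpref_lstar_eq hq.
- exact: lpref_Qq_eq hq.
Qed.
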